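(* For all integers $n,m\ge 2$, \[ \gamma_{2t}(K_n\Box K_m)+1\le\gamma_{2t}(K_{n+1}\Box K_{m+1})\le\gamma_{2t}(K_n\Box K_m)+2. \]
   Context: For a graph $G=(V,E)$, a set $S\subseteq V$ is a total $2$-dominating set if every vertex of $V$ (including those in $S$) is adjacent to at least $2$ vertices of $S$; $\gamma_{2t}(G)$ is the minimum cardinality of such a set. $G\Box H$ denotes the Cartesian product: vertex set $V(G)\times V(H)$, with $(u_1,v_1)\sim(u_2,v_2)$ iff either $u_1=u_2$ and $v_1\sim v_2$, or $v_1=v_2$ and $u_1\sim u_2$. $K_n$ is the complete graph on $n$ vertices. *)

From mathcomp Require Import all_boot.
Set Implicit Arguments. Unset Strict Implicit. Unset Printing Implicit Defensive.

(* A simple graph is a relation [e : rel T] on a finite type (symmetric, irreflexive). *)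

Definition total2dom (T : finType) (e : rel T) (S : {set T}) : bool :=
  [forall v : T, 2 <= #|[set u in S | e v u]|].

(* gamma_{2t}: minimum cardinality of a total 2-dominating set
   (defaults to #|T| if none exists; irrelevant when one exists). *)
Definition gamma2t (T : finType) (e : rel T) : nat :=
  \big[minn/#|T|]_(S : {set T} | total2dom e S) #|S|.

Definition Krel {n : nat} : rel 'I_n := fun i j => i != j.

Definition boxrel (T1 T2 : finType) (e1 : rel T1) (e2 : rel T2) : rel (T1 * T2) :=
  fun x y => ((x.1 == y.1) && e2 x.2 y.2) || ((x.2 == y.2) && e1 x.1 y.1).

Definition gamma2t_KK (n m : nat) : nat := gamma2t (boxrel (@Krel n) (@Krel m)).

(* In K_n \square K_m the neighbours of a cell are the other cells of its row and
   column, so S is total 2-dominating iff row(i) + col(j) >= 2 + 2 [(i, j) \in S]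
   for every cell, where row and col count the points of S.
   Upper bound: add a new row and column to an optimal S.  If every column (or,
   symmetrically, every row) of S has two points, two points on the new column, at
   rows meeting a common column, suffice.  Otherwise some row and some column have at
   most one point, so every line is non-empty, and one point on each new line, aligned
   with a line of S holding two points, suffices.
   Lower bound: let S' be optimal for K_(n+1) \square K_(m+1).  If every column (or
   row) of S' has two points then |S'| >= 2(m + 1) > 2m, the size of two full rows.
   Otherwise a row i0 and a column j0 carry a single point each, (i0, j1) and
   (i1, j0).  Deleting them loses both points, and what remains lacks only one point
   in row i1 and one in column j1.  A single point repairs it: (i1, j1) if absent,
   and otherwise (a, b), where (i1, b) and (a, j1) are the only cells that can be
   left deficient. *)

From mathcomp Require Import all_boot zify.
Set Implicit Arguments. Unset Strict Implicit. Unset Printing Implicit Defensive.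

(* [lia] treats [nat_of_bool b] as an unconstrained atom. *)
Ltac lia_bool :=
  try change (nat_of_bool true) with 1 in *; try change (nat_of_bool false) with 0 in *;
  repeat match goal with |- context [nat_of_bool ?b] =>
    let x := fresh "nb" in have := leq_b1 b; move: (nat_of_bool b) => x end;
  lia.

Section Grid.
Variables n m : nat.
Implicit Types (S : {set 'I_n * 'I_m}) (i : 'I_n) (j : 'I_m).

Definition row_card S i := #|[set j | (i, j) \in S]|.
Definition col_card S j := #|[set i | (i, j) \in S]|.

Definition grid_t2dom S :=
  forall i j, 2 + 2 * ((i, j) \in S) <= row_card S i + col_card S j.

Lemma card_row_slice S i : #|[set u in S | u.1 == i]| = row_card S i.
Proof.
have inj : injective (@pair _ 'I_m i) by move=> x y [].
rewrite /row_card -(card_imset _ inj).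
apply: eq_card => -[a b]; rewrite !inE /=.
apply/andP/imsetP => [[Sab /eqP <-]|[b' ]]; first by exists b; rewrite ?inE.
by rewrite inE => Sib [-> ->].
Qed.

Lemma card_col_slice S j : #|[set u in S | u.2 == j]| = col_card S j.
Proof.
have inj : injective (fun a : 'I_n => (a, j)) by move=> x y [].
rewrite /col_card -(card_imset _ inj).
apply: eq_card => -[a b]; rewrite !inE /=.
apply/andP/imsetP => [[Sab /eqP <-]|[a' ]]; first by exists a; rewrite ?inE.
by rewrite inE => Saj [-> ->].
Qed.

Lemma card_box_nbr S (v : 'I_n * 'I_m) :
  #|[set u in S | boxrel (@Krel n) (@Krel m) v u]| + 2 * (v \in S)
  = row_card S v.1 + col_card S v.2.
Proof.
case: v => i j /=.
set R := [set u in S | u.1 == i]; set C := [set u in S | u.2 == j].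
have card_RIC : #|R :&: C| = ((i, j) \in S).
  have -> : R :&: C = [set u in S | u == (i, j)].
    by apply/setP => -[a b]; rewrite !inE xpair_eqE andbACA andbb.
  case: (boolP ((i, j) \in S)) => Sij.
    by rewrite [RHS]/= -(cards1 (i, j)); apply: eq_card => u; rewrite !inE andb_idl // => /eqP->.
  rewrite [RHS]/=; apply/eqP; rewrite cards_eq0; apply/eqP/setP => u; rewrite !inE.
  by apply/negbTE/andP => -[Su /eqP eu]; move: Sij; rewrite -eu Su.
have nbrE : [set u in S | boxrel (@Krel n) (@Krel m) (i, j) u] = (R :|: C) :\ (i, j).
  apply/setP => -[a b]; rewrite !inE /boxrel /Krel /= xpair_eqE.
  rewrite [i == a]eq_sym [j == b]eq_sym.
  by case: (a == i); case: (b == j); case: ((a, b) \in S).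
have RC_ij : ((i, j) \in R :|: C) = ((i, j) \in S) by rewrite !inE !eqxx !andbT orbb.
rewrite nbrE -card_row_slice -card_col_slice -/R -/C -cardsUI card_RIC.
rewrite [#|R :|: C|](cardsD1 (i, j)) RC_ij.
by rewrite mul2n -addnn addnCA addnA.
Qed.

Lemma total2dom_gridP S :
  total2dom (boxrel (@Krel n) (@Krel m)) S <-> grid_t2dom S.
Proof.
split => [/forallP dom i j | dom]; last apply/forallP => -[i j].
  by rewrite -(card_box_nbr S (i, j)) leq_add2r; exact: dom.
by rewrite -(leq_add2r (2 * ((i, j) \in S))) card_box_nbr; exact: dom.
Qed.

Lemma card_sum_col_card S : #|S| = \sum_j col_card S j.
Proof.
rewrite -sum1_card big_mkcond (eq_bigr (fun u => nat_of_bool ((u.1, u.2) \in S))).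
  2: by case=> a b _; case: ifP.
rewrite -(pair_big xpredT xpredT (fun i j => nat_of_bool ((i, j) \in S))) exchange_big /=.
apply: eq_bigr => j _; rewrite /col_card -sum1_card [RHS]big_mkcond.
by apply: eq_bigr => i _; rewrite inE; case: ifP.
Qed.

Lemma row_card_subset S S' i : S \subset S' -> row_card S i <= row_card S' i.
Proof. by move=> /subsetP sub; apply/subset_leq_card/subsetP => j; rewrite !inE => /sub. Qed.

Lemma col_card_subset S S' j : S \subset S' -> col_card S j <= col_card S' j.
Proof. by move=> /subsetP sub; apply/subset_leq_card/subsetP => i; rewrite !inE => /sub. Qed.

Lemma row_card_setU1 S x i : x \notin S -> row_card (x |: S) i = row_card S i + (x.1 == i).
Proof.
case: x => a b /= Sx; rewrite /row_card.
have [<-|ai] := eqVneq a i.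
  have -> : [set j | (a, j) \in (a, b) |: S] = b |: [set j | (a, j) \in S].
    by apply/setP => j; rewrite !inE xpair_eqE eqxx.
  by rewrite cardsU1 inE Sx addnC.
rewrite addn0; apply: eq_card => j; rewrite !inE xpair_eqE.
by rewrite eq_sym (negbTE ai).
Qed.

Lemma col_card_setU1 S x j : x \notin S -> col_card (x |: S) j = col_card S j + (x.2 == j).
Proof.
case: x => a b /= Sx; rewrite /col_card.
have [<-|bj] := eqVneq b j.
  have -> : [set i | (i, b) \in (a, b) |: S] = a |: [set i | (i, b) \in S].
    by apply/setP => i; rewrite !inE xpair_eqE eqxx andbT.
  by rewrite cardsU1 inE Sx addnC.
rewrite addn0; apply: eq_card => i; rewrite !inE xpair_eqE.
by rewrite [j == b]eq_sym (negbTE bj) andbF.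
Qed.

Lemma grid_t2dom_sparse_lines S i0 j0 :
  grid_t2dom S -> row_card S i0 <= 1 -> col_card S j0 <= 1 ->
  [/\ forall i, 0 < row_card S i, forall j, 0 < col_card S j,
      exists2 i1, (i1, j0) \in S & 2 < row_card S i1
    & exists2 j1, (i0, j1) \in S & 2 < col_card S j1].
Proof.
move=> domS row_i0 col_j0.
have rowS i : 0 < row_card S i by have := domS i j0; lia_bool.
have colS j : 0 < col_card S j by have := domS i0 j; lia_bool.
split=> //.
- have /card_gt0P [i1] := colS j0; rewrite inE => Si1.
  by exists i1 => //; have := domS i1 j0; rewrite Si1; lia.
- have /card_gt0P [j1] := rowS i0; rewrite inE => Sj1.
  by exists j1 => //; have := domS i0 j1; rewrite Sj1; lia.
Qed.

End Grid.

Section Transpose.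
Variables n m : nat.
Implicit Type S : {set 'I_n * 'I_m}.

Definition trset S : {set 'I_m * 'I_n} := [set x | (x.2, x.1) \in S].

Lemma row_card_tr S j : row_card (trset S) j = col_card S j.
Proof. by apply: eq_card => i; rewrite !inE. Qed.

Lemma col_card_tr S i : col_card (trset S) i = row_card S i.
Proof. by apply: eq_card => j; rewrite !inE. Qed.

Lemma grid_t2dom_tr S : grid_t2dom S -> grid_t2dom (trset S).
Proof. by move=> dom j i; rewrite row_card_tr col_card_tr inE [X in _ <= X]addnC; apply: dom. Qed.

Lemma card_trset S : #|trset S| = #|S|.
Proof.
have swap_inj : injective (fun x : 'I_n * 'I_m => (x.2, x.1)) by move=> [a b] [c d] [-> ->].
rewrite -(card_imset _ swap_inj); apply: eq_card => -[a b]; rewrite inE.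
by apply/idP/imsetP => [Sba|[[c d] Scd [-> ->]] //]; exists (b, a).
Qed.

End Transpose.

Lemma bigmin_leq (T : finType) (P : pred T) (F : T -> nat) d x :
  P x -> \big[minn/d]_(y | P y) F y <= F x.
Proof.
move=> Px; have : x \in index_enum T by rewrite mem_index_enum.
elim: (index_enum T) => [|a r IHr] //; rewrite inE big_cons.
case/orP => [/eqP <-|xr]; first by rewrite Px geq_minl.
by case: (P a); rewrite ?geq_min IHr ?orbT.
Qed.

Lemma grid_t2dom_setT n m : 2 <= n -> 2 <= m -> grid_t2dom [set: 'I_n * 'I_m].
Proof.
move=> n2 m2 i j; rewrite inE /row_card /col_card.
rewrite (eq_card (B := 'I_m)) ?(eq_card (B := 'I_n)) => [|?|?]; rewrite ?inE //.
by rewrite !card_ord; lia.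
Qed.

Lemma gamma2t_KK_min n m (S : {set 'I_n * 'I_m}) : grid_t2dom S -> gamma2t_KK n m <= #|S|.
Proof. by move=> /total2dom_gridP; apply: bigmin_leq. Qed.

Lemma gamma2t_KK_witness n m : 2 <= n -> 2 <= m ->
  exists2 S : {set 'I_n * 'I_m}, grid_t2dom S & #|S| = gamma2t_KK n m.
Proof.
move=> n2 m2; rewrite /gamma2t_KK /gamma2t.
apply: (big_ind (fun k => exists2 S : {set 'I_n * 'I_m}, grid_t2dom S & #|S| = k))
  => [|x y [S domS <-] [S' domS' <-]|S /total2dom_gridP domS].
- by exists setT; [exact: grid_t2dom_setT | rewrite cardsT].
- by case: (leqP #|S| #|S'|) => _; [exists S | exists S'].
- by exists S.
Qed.

Lemma card_set_lift k (r : 'I_k.+1) (P : pred 'I_k.+1) :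
  #|[set i | P i]| = #|[set i : 'I_k | P (lift r i)]| + P r.
Proof.
rewrite (cardsD1 r) inE addnC; congr (_ + _).
rewrite -(card_imset _ (@lift_inj _ r)); apply: eq_card => x; rewrite !inE.
case: (unliftP r x) => [y ->|->].
  by rewrite eq_sym neq_lift (mem_imset _ _ (@lift_inj _ r)) inE.
by rewrite eqxx; apply/esym/imsetP => -[y _ /eqP]; rewrite eq_liftF.
Qed.

Section Lift.
Variables (n m : nat) (r : 'I_n.+1) (c : 'I_m.+1).
Implicit Type S : {set 'I_n * 'I_m}.

Definition unlift_set (S' : {set 'I_n.+1 * 'I_m.+1}) : {set 'I_n * 'I_m} :=
  [set x | (lift r x.1, lift c x.2) \in S'].
Definition lift_set S : {set 'I_n.+1 * 'I_m.+1} := [set (lift r x.1, lift c x.2) | x in S].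

Lemma lift2_inj : injective (fun x : 'I_n * 'I_m => (lift r x.1, lift c x.2)).
Proof.
move=> [a b] [a' b'] /= e.
by move: (congr1 fst e) (congr1 snd e) => /= /lift_inj-> /lift_inj->.
Qed.

Lemma mem_lift_set S i j : ((lift r i, lift c j) \in lift_set S) = ((i, j) \in S).
Proof. exact: (mem_imset S (i, j) lift2_inj). Qed.

Lemma card_lift_set S : #|lift_set S| = #|S|.
Proof. exact: card_imset lift2_inj. Qed.

Lemma lift_setK : cancel lift_set unlift_set.
Proof. by move=> S; apply/setP => -[i j]; rewrite inE mem_lift_set. Qed.

Lemma lift_unlift_subset (S' : {set 'I_n.+1 * 'I_m.+1}) : lift_set (unlift_set S') \subset S'.
Proof. by apply/subsetP => _ /imsetP[x + ->]; rewrite inE. Qed.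

Lemma lift_set_row S j : ((r, j) \in lift_set S) = false.
Proof. by apply/imsetP => -[x _ [/eqP]]; rewrite eq_liftF. Qed.

Lemma lift_set_col S i : ((i, c) \in lift_set S) = false.
Proof. by apply/imsetP => -[x _ [_ /eqP]]; rewrite eq_liftF. Qed.

Lemma unlift_set_setU1 (S' : {set 'I_n.+1 * 'I_m.+1}) x :
  (x.1 == r) || (x.2 == c) -> unlift_set (x |: S') = unlift_set S'.
Proof.
case: x => a b /= border; apply/setP => -[i j]; rewrite !inE xpair_eqE.
by case/orP: border => /eqP ->; rewrite lift_eqF ?andbF.
Qed.

Lemma row_card_lift (S' : {set 'I_n.+1 * 'I_m.+1}) i :
  row_card S' (lift r i) = row_card (unlift_set S') i + ((lift r i, c) \in S').
Proof.
rewrite /row_card (card_set_lift c (fun j => (lift r i, j) \in S')); congr (_ + _).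
by apply: eq_card => j; rewrite !inE.
Qed.

Lemma col_card_lift (S' : {set 'I_n.+1 * 'I_m.+1}) j :
  col_card S' (lift c j) = col_card (unlift_set S') j + ((r, lift c j) \in S').
Proof.
rewrite /col_card (card_set_lift r (fun i => (i, lift c j) \in S')); congr (_ + _).
by apply: eq_card => i; rewrite !inE.
Qed.

Lemma card_unlift_set_add2 (S' : {set 'I_n.+1 * 'I_m.+1}) i j :
  (r, j) \in S' -> (i, c) \in S' -> i != r -> #|unlift_set S'| + 2 <= #|S'|.
Proof.
move=> S'j S'i ir.
have sub : (r, j) |: ((i, c) |: lift_set (unlift_set S')) \subset S'.
  by rewrite !subUset !sub1set S'j S'i lift_unlift_subset.
apply: leq_trans (subset_leq_card sub).
rewrite !cardsU1 card_lift_set !in_setU1 lift_set_row lift_set_col xpair_eqE eq_sym (negbTE ir).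
by rewrite addnC.
Qed.

Lemma unlift_set_t2dom (S' : {set 'I_n.+1 * 'I_m.+1}) i1 j1 : grid_t2dom S' ->
  (forall i, ((lift r i, c) \in S') = (i == i1)) ->
  (forall j, ((r, lift c j) \in S') = (j == j1)) ->
  forall i j, 2 + 2 * ((i, j) \in unlift_set S') <=
    row_card (unlift_set S') i + (i == i1) + col_card (unlift_set S') j + (j == j1).
Proof.
move=> domS' S'col S'row i j.
have := domS' (lift r i) (lift c j).
by rewrite row_card_lift col_card_lift S'col S'row inE addnA.
Qed.

Lemma grid_t2dom_extend (S' : {set 'I_n.+1 * 'I_m.+1}) :
  grid_t2dom (unlift_set S') ->
  (forall j, 2 + 2 * ((r, j) \in S') <= row_card S' r + col_card S' j) ->
  (forall i, 2 + 2 * ((i, c) \in S') <= row_card S' i + col_card S' c) ->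
  grid_t2dom S'.
Proof.
move=> dom domr domc a b.
case: (unliftP r a) => [i ->|->] //; case: (unliftP c b) => [j ->|->] //.
rewrite row_card_lift col_card_lift.
have := dom i j; rewrite inE /=; lia_bool.
Qed.

End Lift.

Section Extend.
Variables n m : nat.
Implicit Type S : {set 'I_n * 'I_m}.

Lemma grid_t2dom_extend_cols S : 2 <= m -> grid_t2dom S -> (forall j, 1 < col_card S j) ->
  exists2 S' : {set 'I_n.+1 * 'I_m.+1}, grid_t2dom S' & #|S'| <= #|S| + 2.
Proof.
move=> m2 domS colS; pose j0 := Ordinal (ltnW m2).
have /card_gt1P [i0 [i1 [Si0 Si1 i01]]] := colS j0; rewrite !inE in Si0 Si1.
pose S' := (lift ord0 i0, ord0) |: ((lift ord0 i1, ord0) |: lift_set ord0 ord0 S).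
exists S'; last by rewrite !cardsU1 card_lift_set; lia_bool.
have unS' : unlift_set ord0 ord0 S' = S by rewrite !unlift_set_setU1 ?lift_setK ?eqxx ?orbT.
have col0 : 1 < col_card S' ord0.
  apply/card_gt1P; exists (lift ord0 i0), (lift ord0 i1).
  by rewrite !inE !eqxx ?orbT (inj_eq (@lift_inj _ _)).
apply: (grid_t2dom_extend (r := ord0) (c := ord0)); first by rewrite unS'.
- move=> j; rewrite !in_setU1 !xpair_eqE eq_liftF lift_set_row /=.
  case: (unliftP ord0 j) => [j' ->|->]; last by lia.
  by rewrite (col_card_lift ord0) unS'; have := colS j'; lia_bool.
- move=> i; case: (unliftP ord0 i) => [i' ->|->]; last first.
    by rewrite !in_setU1 !xpair_eqE eq_liftF lift_set_col /=; lia.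
  rewrite (row_card_lift _ ord0) unS'.
  have -> : ((lift ord0 i', ord0) \in S') = (i' == i0) || (i' == i1).
    by rewrite !in_setU1 !xpair_eqE !(inj_eq (@lift_inj _ _)) eqxx lift_set_col !andbT orbF.
  case i'01: (_ || _); last by lia.
  have : 0 < row_card S i' by apply/card_gt0P; exists j0; case/orP: i'01 => /eqP->; rewrite inE.
  lia_bool.
Qed.

Lemma grid_t2dom_extend_lines S i1 j1 : grid_t2dom S ->
  (forall i, 0 < row_card S i) -> (forall j, 0 < col_card S j) ->
  1 < row_card S i1 -> 1 < col_card S j1 ->
  exists2 S' : {set 'I_n.+1 * 'I_m.+1}, grid_t2dom S' & #|S'| <= #|S| + 2.
Proof.
move=> domS rowS colS row_i1 col_j1.
pose S' := (ord0, lift ord0 j1) |: ((lift ord0 i1, ord0) |: lift_set ord0 ord0 S).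
exists S'; last by rewrite !cardsU1 card_lift_set; lia_bool.
have unS' : unlift_set ord0 ord0 S' = S by rewrite !unlift_set_setU1 ?lift_setK ?eqxx ?orbT.
have row0 : 0 < row_card S' ord0 by apply/card_gt0P; exists (lift ord0 j1); rewrite !inE eqxx.
have col0 : 0 < col_card S' ord0 by apply/card_gt0P; exists (lift ord0 i1); rewrite !inE eqxx orbT.
have S'00 : ((ord0, ord0) \in S') = false.
  by rewrite !in_setU1 !xpair_eqE !eq_liftF lift_set_row.
apply: (grid_t2dom_extend (r := ord0) (c := ord0)); first by rewrite unS'.
- move=> j; case: (unliftP ord0 j) => [j' ->|->]; last by rewrite S'00; lia.
  have S'0j : ((ord0, lift ord0 j') \in S') = (j' == j1).
    by rewrite !in_setU1 !xpair_eqE (inj_eq (@lift_inj _ _)) eqxx eq_liftF lift_set_row andbF !orbF.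
  rewrite (col_card_lift ord0) unS' S'0j; have := colS j'.
  by case: eqP => [->|_]; lia_bool.
- move=> i; case: (unliftP ord0 i) => [i' ->|->]; last by rewrite S'00; lia.
  have S'i0 : ((lift ord0 i', ord0) \in S') = (i' == i1).
    rewrite !in_setU1 !xpair_eqE (inj_eq (@lift_inj _ _)) eqxx eq_liftF lift_set_col.
    by rewrite /= orbF andbT.
  rewrite (row_card_lift _ ord0) unS' S'i0; have := rowS i'.
  by case: eqP => [->|_]; lia_bool.
Qed.

End Extend.

Lemma grid_t2dom_grow n m (S : {set 'I_n * 'I_m}) : 2 <= n -> 2 <= m -> grid_t2dom S ->
  exists2 S' : {set 'I_n.+1 * 'I_m.+1}, grid_t2dom S' & #|S'| <= #|S| + 2.
Proof.
move=> n2 m2 domS.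
case: (boolP [forall j, 1 < col_card S j]) => [/forallP|/forallPn[j0]].
  exact: grid_t2dom_extend_cols.
case: (boolP [forall i, 1 < row_card S i]) => [/forallP rowS|/forallPn[i0]].
  have [S'' domS'' cardS''] :
      exists2 S'' : {set 'I_m.+1 * 'I_n.+1}, grid_t2dom S'' & #|S''| <= #|trset S| + 2.
    by apply: grid_t2dom_extend_cols (grid_t2dom_tr domS) _ => // j; rewrite col_card_tr.
  by exists (trset S''); rewrite ?card_trset -?(card_trset S) //; exact: grid_t2dom_tr.
rewrite -!leqNgt => row_i0 col_j0.
have [rowS colS [i1 _ row_i1] [j1 _ col_j1]] := grid_t2dom_sparse_lines domS row_i0 col_j0.
by apply: (grid_t2dom_extend_lines (i1 := i1) (j1 := j1)); rewrite // ltnW.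
Qed.

Lemma grid_t2dom_two_rows n m : 2 <= n -> 2 <= m ->
  exists2 S : {set 'I_n * 'I_m}, grid_t2dom S & #|S| = 2 * m.
Proof.
move=> n2 m2; pose A := [set Ordinal (ltnW n2); Ordinal n2].
have cardA : #|A| = 2 by rewrite cards2.
exists (setX A setT); last by rewrite cardsX cardA cardsT card_ord.
move=> i j; rewrite in_setX in_setT andbT /row_card /col_card.
rewrite (eq_card (B := A)) => [|i']; last by rewrite !inE andbT.
rewrite cardA; case Ai: (i \in A); last by lia.
rewrite (eq_card (B := [set: 'I_m])) => [|j']; last by rewrite inE in_setX Ai !in_setT.
by rewrite cardsT card_ord; lia_bool.
Qed.

Lemma grid_t2dom_shrink_cols n m (S' : {set 'I_n.+1 * 'I_m.+1}) : 2 <= n -> 2 <= m ->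
  (forall j, 1 < col_card S' j) ->
  exists2 S : {set 'I_n * 'I_m}, grid_t2dom S & #|S| < #|S'|.
Proof.
move=> n2 m2 colS'; have [S domS cardS] := grid_t2dom_two_rows n2 m2.
exists S => //; rewrite cardS card_sum_col_card.
have : \sum_(j < m.+1) 2 <= \sum_j col_card S' j by apply: leq_sum => j _; exact: colS'.
by rewrite sum_nat_const card_ord; lia.
Qed.

Lemma exists_neq_absorbing (T : finType) (P : pred T) t :
  1 < #|T| -> (forall x, P x -> x != t) -> {in P &, forall x y, x = y} ->
  exists2 b : T, b != t & forall x, P x -> x = b.
Proof.
move=> T2 Pt Puniq; case: (pickP P) => [b Pb|P0].
  by exists b => [|x Px]; [exact: Pt | exact: Puniq].
have /card_gt1P [x [y [_ _ xy]]] := T2.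
case: (eqVneq x t) => [xt|xt]; last by exists x => // z; rewrite P0.
by exists y => [|z]; [rewrite -xt eq_sym | rewrite P0].
Qed.

(* Two such columns [j] would put three points on row [i1], making
   [row_card S i1 + col_card S j] at least 4. *)
Lemma single_deficient_col n m (S : {set 'I_n * 'I_m}) i1 j1 : 2 <= m ->
  (i1, j1) \in S -> (forall j, 0 < col_card S j) ->
  exists2 b : 'I_m, b != j1 & forall j, j != j1 -> (i1, j) \in S ->
    row_card S i1 + col_card S j < 4 -> j = b.
Proof.
move=> m2 Sij1 colS.
have [|j j1j|j j' /and3P[j1j Sj defj] /and3P[j1j' Sj' defj']|b bj1 defb] :=
  @exists_neq_absorbing _
    [pred j | [&& j != j1, (i1, j) \in S & row_card S i1 + col_card S j < 4]] j1.
- by rewrite card_ord.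
- by case/and3P: j1j.
- case: (eqVneq j j') => // jj'.
  have : 2 < row_card S i1.
    by apply/card_gt2P; exists j1, j, j'; rewrite !inE Sij1 Sj Sj' jj' eq_sym j1j j1j'.
  by have := colS j; lia.
- by exists b => // j j1j Sj defj; apply: defb; rewrite inE j1j Sj.
Qed.

Section Repair.
Variables (n m : nat) (S : {set 'I_n * 'I_m}) (i1 : 'I_n) (j1 : 'I_m).

(* [S] would be total 2-dominating if row [i1] and column [j1] had one more point each. *)
Hypothesis domS :
  forall i j, 2 + 2 * ((i, j) \in S) <= row_card S i + (i == i1) + col_card S j + (j == j1).
Hypotheses (rowS : forall i, 0 < row_card S i) (colS : forall j, 0 < col_card S j).
Hypotheses (row_i1 : 1 < row_card S i1) (col_j1 : 1 < col_card S j1).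

Lemma grid_t2dom_repair_absent : (i1, j1) \notin S -> grid_t2dom ((i1, j1) |: S).
Proof.
move=> Sij1 i j; rewrite row_card_setU1 // col_card_setU1 // in_setU1 xpair_eqE /=.
rewrite [i1 == i]eq_sym [j1 == j]eq_sym; have := domS i j.
by case: eqP => [->|_]; case: eqP => [->|_] /=; rewrite ?(negbTE Sij1); lia_bool.
Qed.

Lemma grid_t2dom_repair_present : 2 <= n -> 2 <= m -> (i1, j1) \in S ->
  exists x : 'I_n * 'I_m, grid_t2dom (x |: S).
Proof.
move=> n2 m2 Sij1.
have [b bj1 defb] := single_deficient_col m2 Sij1 colS.
have [a ai1 defa] : exists2 a : 'I_n, a != i1 & forall i, i != i1 -> (i, j1) \in S ->
    row_card S i + col_card S j1 < 4 -> i = a.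
  have Sji1 : (j1, i1) \in trset S by rewrite inE.
  have colT i : 0 < col_card (trset S) i by rewrite col_card_tr.
  have [a ai1 defa] := single_deficient_col n2 Sji1 colT.
  by exists a => // i ii1 Si defi; apply: defa; rewrite ?inE // row_card_tr col_card_tr addnC.
exists (a, b); have subS : S \subset (a, b) |: S := subsetU1 _ _.
move=> i j; have := row_card_subset i subS; have := col_card_subset j subS.
case Sij: ((i, j) \in S); last first.
  case: (boolP ((a, b) \in S)) => Sab.
    by rewrite (setUidPr _) ?sub1set // Sij; have := rowS i; have := colS j; lia.
  rewrite in_setU1 Sij orbF xpair_eqE row_card_setU1 // col_card_setU1 //=.
  rewrite [a == i]eq_sym [b == j]eq_sym.
  by have := rowS i; have := colS j; case: (i == a); case: (j == b) => /=; lia_bool.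
rewrite in_setU1 Sij orbT; have := domS i j; rewrite Sij; have := row_i1; have := col_j1.
case: (eqVneq i i1) Sij => [->|ii1] Sij; case: (eqVneq j j1) Sij => [->|jj1] Sij /=; try lia_bool.
- case: (leqP 4 (row_card S i1 + col_card S j)) => [|def]; first by lia_bool.
  rewrite (defb j jj1 Sij def); have : 1 < col_card ((a, b) |: S) b.
    by apply/card_gt1P; exists a, i1; rewrite !inE !eqxx ai1 -(defb j jj1 Sij def) Sij orbT.
  by lia_bool.
- case: (leqP 4 (row_card S i + col_card S j1)) => [|def]; first by lia_bool.
  rewrite (defa i ii1 Sij def); have : 1 < row_card ((a, b) |: S) a.
    by apply/card_gt1P; exists b, j1; rewrite !inE !eqxx bj1 -(defa i ii1 Sij def) Sij orbT.
  by lia_bool.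
Qed.

Lemma grid_t2dom_repair : 2 <= n -> 2 <= m -> exists x : 'I_n * 'I_m, grid_t2dom (x |: S).
Proof.
move=> n2 m2; case: (boolP ((i1, j1) \in S)) => Sij1; first exact: grid_t2dom_repair_present.
by exists (i1, j1); apply: grid_t2dom_repair_absent.
Qed.

End Repair.

Lemma grid_t2dom_shrink_lines n m (S' : {set 'I_n.+1 * 'I_m.+1}) i0 j0 :
  2 <= n -> 2 <= m -> grid_t2dom S' -> row_card S' i0 <= 1 -> col_card S' j0 <= 1 ->
  exists2 S : {set 'I_n * 'I_m}, grid_t2dom S & #|S| < #|S'|.
Proof.
move=> n2 m2 domS' row_i0 col_j0.
have [rowS' colS' [i1 S'i1 row_i1] [j1 S'j1 col_j1]] :=
  grid_t2dom_sparse_lines domS' row_i0 col_j0.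
have S'row j : ((i0, j) \in S') = (j == j1).
  by apply/idP/eqP => [S'j|->] //; apply: (card_le1_eqP row_i0); rewrite inE.
have S'col i : ((i, j0) \in S') = (i == i1).
  by apply/idP/eqP => [S'i|->] //; apply: (card_le1_eqP col_j0); rewrite inE.
have S'00 : (i0, j0) \notin S' by apply/negP => S'00; have := domS' i0 j0; rewrite S'00; lia.
have [j1' ej1] : exists j1', j1 = lift j0 j1'.
  by case: (unliftP j0 j1) => [j ->|ej]; [exists j | move: S'00; rewrite -ej S'row ej eqxx].
have [i1' ei1] : exists i1', i1 = lift i0 i1'.
  by case: (unliftP i0 i1) => [i ->|ei]; [exists i | move: S'00; rewrite -ei S'i1].
have row_i1' : 1 < row_card (unlift_set i0 j0 S') i1'.
  by move: row_i1; rewrite ei1 (row_card_lift _ j0) S'col ei1 eqxx addn1.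
have col_j1' : 1 < col_card (unlift_set i0 j0 S') j1'.
  by move: col_j1; rewrite ej1 (col_card_lift i0) S'row ej1 eqxx addn1.
have [x domS] : exists x, grid_t2dom (x |: unlift_set i0 j0 S').
  apply: (grid_t2dom_repair (i1 := i1') (j1 := j1')) => // [|i|j].
  - apply: unlift_set_t2dom => // [i|j].
      by rewrite S'col ei1 (inj_eq (@lift_inj _ _)).
    by rewrite S'row ej1 (inj_eq (@lift_inj _ _)).
  - case: (eqVneq i i1') => [->|ii1]; first exact: ltnW row_i1'.
    move: (rowS' (lift i0 i)); rewrite (row_card_lift _ j0) S'col ei1.
    by rewrite (inj_eq (@lift_inj _ _)) (negbTE ii1) addn0.
  - case: (eqVneq j j1') => [->|jj1]; first exact: ltnW col_j1'.
    move: (colS' (lift j0 j)); rewrite (col_card_lift i0) S'row ej1.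
    by rewrite (inj_eq (@lift_inj _ _)) (negbTE jj1) addn0.
exists (x |: unlift_set i0 j0 S') => //.
have i1i0 : i1 != i0 by rewrite ei1 eq_sym neq_lift.
have := card_unlift_set_add2 S'j1 S'i1 i1i0.
by rewrite cardsU1; lia_bool.
Qed.

Lemma grid_t2dom_shrink n m (S' : {set 'I_n.+1 * 'I_m.+1}) : 2 <= n -> 2 <= m ->
  grid_t2dom S' -> exists2 S : {set 'I_n * 'I_m}, grid_t2dom S & #|S| < #|S'|.
Proof.
move=> n2 m2 domS'.
case: (boolP [forall j, 1 < col_card S' j]) => [/forallP|/forallPn[j0]].
  exact: grid_t2dom_shrink_cols.
case: (boolP [forall i, 1 < row_card S' i]) => [/forallP rowS'|/forallPn[i0]].
  have [|S domS cardS] := @grid_t2dom_shrink_cols m n (trset S') m2 n2.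
    by move=> i; rewrite col_card_tr.
  by exists (trset S); [exact: grid_t2dom_tr | rewrite card_trset -(card_trset S')].
rewrite -!leqNgt => row_i0 col_j0.
exact: grid_t2dom_shrink_lines row_i0 col_j0.
Qed.

Theorem lemma11 (n m : nat) (hn : 2 <= n) (hm : 2 <= m) :
  gamma2t_KK n m + 1 <= gamma2t_KK n.+1 m.+1 <= gamma2t_KK n m + 2.
Proof.
have hn1 : 2 <= n.+1 by apply: leqW.
have hm1 : 2 <= m.+1 by apply: leqW.
apply/andP; split.
- have [S' domS' <-] := gamma2t_KK_witness hn1 hm1.
  have [S domS ltSS'] := grid_t2dom_shrink hn hm domS'.
  by rewrite addn1; apply: leq_ltn_trans (gamma2t_KK_min domS) ltSS'.
- have [S domS <-] := gamma2t_KK_witness hn hm.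
  have [S' domS' leS'S] := grid_t2dom_grow hn hm domS.
  exact: leq_trans (gamma2t_KK_min domS') leS'S.
Qed.
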